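(* Let $(M,\cdot,1)$ be a monoid, $\Sigma$ a finite alphabet, $A=(Q,\Sigma,u,i_u,\delta,w,\rho)$ an $M$-DFA recognizing $\mathcal{A}$, and $(g^\pi_A,f^\pi_A)$ the factorization on $L$ induced by $A$ for a selection function $\pi$. Then the right congruence $\equiv^{(g^\pi_A,f^\pi_A)}_{f^\pi_A(\mathcal{A})}$ on $\Sigma^*$ has finite index.
   Context: $L$ is the set of all functions $\Sigma^*\to M$; $(m\cdot\ell)(\gamma)=m\cdot\ell(\gamma)$; $\varepsilon$ is the empty word. An $M$-DFA is $A=(Q,\Sigma,u,i_u,\delta,w,\rho)$ with $Q$ finite nonempty, initial state $u$, initial value $i_u\in M$, $\delta:Q\times\Sigma\to Q$, $w:Q\times\Sigma\to M$, $\rho:Q\to M$. Write $q\alpha$ for the extended transition, $w^*(q,\varepsilon)=1$, $w^*(q,\alpha\sigma)=w^*(q,\alpha)\cdot w(q\alpha,\sigma)$; $\mathcal{A}(\alpha)=i_u\cdot w^*(u,\alpha)\cdot\rho(u\alpha)$ and $\mathcal{A}_q(\alpha)=w^*(q,\alpha)\cdot\rho(q\alpha)$. $\Delta_\alpha(\ell)(\gamma)=\ell(\alpha\gamma)$. Induced factorization: let $P_A=\{((\sigma,q),\Delta_\sigma(\mathcal{A}_q))\mid\sigma\in\Sigma,q\in Q\}\cup\{((\varepsilon,u),\mathcal{A})\}$, with $\approx_A$ identifying elements with equal language component. A selection function $\pi$ picks a representative per class, always picking $((\varepsilon,u),\mathcal{A})$ for its class. Then $f^\pi_A(\mathcal{A})=\mathcal{A}_u$,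 $g^\pi_A(\mathcal{A})=i_u$; if $\ell\neq\mathcal{A}$ is the language component of a class with representative $((\sigma,q),\Delta_\sigma(\mathcal{A}_q))$, then $f^\pi_A(\ell)=\mathcal{A}_{q\sigma}$, $g^\pi_A(\ell)=w(q,\sigma)$; otherwise $f^\pi_A(\ell)=\ell$, $g^\pi_A(\ell)=1$. (This pair satisfies $g^\pi_A(\ell)\cdot f^\pi_A(\ell)=\ell$.) For a pair $(g,f)$ with $g:L\to M$, $f:L\to L$, define $S^{(g,f)}_\varepsilon=\mathrm{id}_L$ and $S^{(g,f)}_{\alpha\sigma}=f\circ\Delta_\sigma\circ S^{(g,f)}_\alpha$; for $\ell\in L$, $\alpha\equiv^{(g,f)}_\ell\beta\iff S^{(g,f)}_\alpha(\ell)=S^{(g,f)}_\beta(\ell)$. Finite index means finitely many equivalence classes. *)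

From mathcomp Require Import all_boot.
From Stdlib Require Import ClassicalEpsilon.
Set Implicit Arguments. Unset Strict Implicit. Unset Printing Implicit Defensive.

Section MDFA.
Variables (Sigma : finType) (M : Type) (mul : M -> M -> M) (one : M).

Definition is_monoid : Prop :=
  [/\ forall a b c, mul a (mul b c) = mul (mul a b) c,
      forall a, mul one a = a & forall a, mul a one = a].

Definition lang := seq Sigma -> M.

Definition Delta (alpha : seq Sigma) (l : lang) : lang := fun gamma => l (alpha ++ gamma).

Record mdfa (Q : finType) := MDfa {
  init : Q;
  ival : M;
  trans : Q -> Sigma -> Q;
  wt : Q -> Sigma -> M;
  out : Q -> M
}.

Variable Q : finType.
Variable A : mdfa Q.

Definition ext (q : Q) (alpha : seq Sigma) : Q := foldl (trans A) q alpha.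

(* w^*(q, eps) = 1, w^*(q, alpha sigma) = w^*(q,alpha) * w(q alpha, sigma);
   defined by recursion on the reversed word r = rev alpha. *)
Fixpoint wstar_rev (q : Q) (r : seq Sigma) : M :=
  match r with
  | [::] => one
  | s :: r' => mul (wstar_rev q r') (wt A (ext q (rev r')) s)
  end.
Definition wstar (q : Q) (alpha : seq Sigma) : M := wstar_rev q (rev alpha).

Definition recognized : lang :=
  fun alpha => mul (mul (ival A) (wstar (init A) alpha)) (out A (ext (init A) alpha)).

Definition state_lang (q : Q) : lang :=
  fun alpha => mul (wstar q alpha) (out A (ext q alpha)).

(* Elements of P_A are indexed by option (Sigma * Q):
   None stands for ((eps,u), A), Some (sigma,q) for ((sigma,q), Delta_sigma(A_q)).
   pcomp p is the language component of the element indexed by p. *)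
Definition pcomp (p : option (Sigma * Q)) : lang :=
  match p with
  | None => recognized
  | Some (s, q) => Delta [:: s] (state_lang q)
  end.

(* p ~_A p' iff equal language components. A selection function picks one
   representative per ~_A-class (pi p is the representative of the class of p),
   always picking ((eps,u),A) for its class. *)
Definition is_selection (pi : option (Sigma * Q) -> option (Sigma * Q)) : Prop :=
  [/\ forall p, pcomp (pi p) = pcomp p,
      forall p p', pcomp p = pcomp p' -> pi p = pi p'
    & forall p, pcomp p = recognized -> pi p = None].

Variable pi : option (Sigma * Q) -> option (Sigma * Q).

Definition f_pi (l : lang) : lang :=
  match excluded_middle_informative (l = recognized) with
  | left _ => state_lang (init A)
  | right _ =>
    match excluded_middle_informative (exists p, pcomp p = l) with
    | left H =>
      match pi (proj1_sig (constructive_indefinite_description _ H)) with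
      | Some (s, q) => state_lang (trans A q s)
      | None => l
      end
    | right _ => l
    end
  end.

Definition g_pi (l : lang) : M :=
  match excluded_middle_informative (l = recognized) with
  | left _ => ival A
  | right _ =>
    match excluded_middle_informative (exists p, pcomp p = l) with
    | left H =>
      match pi (proj1_sig (constructive_indefinite_description _ H)) with
      | Some (s, q) => wt A q s
      | None => one
      end
    | right _ => one
    end
  end.

End MDFA.

Section Congruence.
Variables (Sigma : finType) (M : Type).

(* S_eps = id, S_{alpha sigma} = f o Delta_sigma o S_alpha (recursion on rev alpha) *)
Fixpoint S_rev (gf : (lang Sigma M -> M) * (lang Sigma M -> lang Sigma M))
    (r : seq Sigma) (l : lang Sigma M) : lang Sigma M :=
  match r with
  | [::] => l
  | s :: r' => gf.2 (Delta [:: s] (S_rev gf r' l))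
  end.
Definition S (gf : (lang Sigma M -> M) * (lang Sigma M -> lang Sigma M))
    (alpha : seq Sigma) (l : lang Sigma M) : lang Sigma M := S_rev gf (rev alpha) l.

Definition cong gf (l : lang Sigma M) (alpha beta : seq Sigma) : Prop :=
  S gf alpha l = S gf beta l.

(* finite index: finitely many equivalence classes, i.e. a finite list of
   words meets every class *)
Definition finite_index (R : seq Sigma -> seq Sigma -> Prop) : Prop :=
  exists reps : seq (seq Sigma), forall alpha, exists2 beta, beta \in reps & R alpha beta.

End Congruence.

(* Along every word, the orbit [S_alpha(f(A))] of the congruence stays inside the
   finitely many state languages [A_q]: it starts at [f(A) = A_u], and [f] sends
   each [Delta_sigma(A_q)] to [A_(q' sigma')] for the representative
   [((sigma', q'), _)] of its class, which cannot be [((eps, u), A)] unless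
   [Delta_sigma(A_q) = A], in which case [f] gives [A_u]. Two words reaching the
   same [A_q] are congruent, so one word per reachable state is a set of
   representatives. *)
From Pilot Require Import Defs.
From mathcomp Require Import all_boot.
From Stdlib Require Import ClassicalEpsilon.

Section OrbitCongruence.
Variables (Sigma : finType) (M : Type).
Variable gf : (lang Sigma M -> M) * (lang Sigma M -> lang Sigma M).

Lemma S_rcons (alpha : seq Sigma) (s : Sigma) (l : lang Sigma M) :
  S gf (rcons alpha s) l = gf.2 (Delta [:: s] (S gf alpha l)).
Proof. by rewrite /S rev_rcons. Qed.

Lemma finite_index_cong_finite_orbit (T : finType) (F : T -> lang Sigma M)
    (l : lang Sigma M) :
  (forall alpha, exists t, S gf alpha l = F t) -> finite_index (cong gf l).
Proof.
move=> orbitF.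
pose rep t := epsilon (inhabits [::]) (fun beta => S gf beta l = F t).
exists (map rep (enum T)) => alpha.
have [t St] := orbitF alpha.
exists (rep t); first by rewrite map_f ?mem_enum.
have repE : S gf (rep t) l = F t.
  exact: (epsilon_spec (inhabits [::]) (fun beta => S gf beta l = F t)
           (ex_intro _ alpha St)).
by rewrite /cong St repE.
Qed.

End OrbitCongruence.

Section InducedFactorization.
Variables (Sigma : finType) (M : Type) (mul : M -> M -> M) (one : M).
Variables (Q : finType) (A : mdfa Sigma M Q).
Variable pi : option (Sigma * Q) -> option (Sigma * Q).
Hypothesis Hpi : is_selection mul one A pi.

Let Aq := state_lang mul one A.
Let f := f_pi mul one A pi.

Lemma f_pi_recognized : f (recognized mul one A) = Aq (init A).
Proof. by rewrite /f /f_pi; case: excluded_middle_informative. Qed.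

(* Qualified because ssrfun's [pcomp] shadows it. *)
Lemma selection_Some p :
  Defs.pcomp mul one A p <> recognized mul one A -> exists s q, pi p = Some (s, q).
Proof.
case: Hpi => pi_comp _ _ notA.
move: (pi_comp p); case: (pi p) => [[s q] _|/= pA]; first by exists s, q.
by case: notA.
Qed.

Lemma f_pi_Delta_state_lang (s : Sigma) (q : Q) :
  exists q', f (Delta [:: s] (Aq q)) = Aq q'.
Proof.
have [_ pi_class _] := Hpi.
rewrite /f /f_pi.
case: excluded_middle_informative => [_ | notA]; first by exists (init A).
case: excluded_middle_informative => [inP | []]; last by exists (Some (s, q)).
case: (constructive_indefinite_description _ inP) => p /= pE.
rewrite (pi_class p (Some (s, q))) //.
by have [s' [q' ->]] := selection_Some (Some (s, q)) notA; exists (trans A q' s').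
Qed.

Lemma S_f_pi_recognized_state_lang (alpha : seq Sigma) :
  exists q, S (g_pi mul one A pi, f) alpha (f (recognized mul one A)) = Aq q.
Proof.
elim/last_ind: alpha => [|alpha s [q Sq]].
  by exists (init A); rewrite f_pi_recognized.
by rewrite S_rcons Sq; apply: f_pi_Delta_state_lang.
Qed.

End InducedFactorization.

Theorem lemma5 (Sigma : finType) (M : Type) (mul : M -> M -> M) (one : M)
  (HM : is_monoid mul one) (Q : finType) (A : mdfa Sigma M Q)
  (pi : option (Sigma * Q) -> option (Sigma * Q))
  (Hpi : is_selection mul one A pi) :
  finite_index
    (cong (g_pi mul one A pi, f_pi mul one A pi)
          (f_pi mul one A pi (recognized mul one A))).
Proof.
apply: (@finite_index_cong_finite_orbit _ _ _ _ (state_lang mul one A)).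
exact: S_f_pi_recognized_state_lang.
Qed.
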